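(* Let $\nu\ge0$, $\Psi_\nu(x)=I_{\nu+1}(x)/I_\nu(x)$ and $$\lambda_\nu(x)=\frac{\log\left(1-\frac{2}{x}\Psi_\nu(x)\right)}{\log\Psi_\nu(x)}.$$ Then $$\lim_{x\to\infty}\lambda_\nu(x)=\frac{4}{2\nu+1}.$$
   Context: $I_\nu$ denotes the modified Bessel function of the first kind of order $\nu$. *)

From Stdlib Require Import Reals.
From Coquelicot Require Import Coquelicot.
Open Scope R_scope.

Definition Gamma (s : R) : R :=
  RInt_gen (fun t => Rpower t (s - 1) * exp (- t))
           (at_right 0) (Rbar_locally p_infty).

Definition BesselI (nu x : R) : R :=
  Series (fun k : nat =>
    Rpower (x / 2) (2 * INR k + nu) / (INR (Factorial.fact k) * Gamma (INR k + nu + 1))).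

Definition Psi (nu x : R) : R := BesselI (nu + 1) x / BesselI nu x.

Definition lambda (nu x : R) : R :=
  ln (1 - (2 / x) * Psi nu x) / ln (Psi nu x).

From Stdlib Require Import Reals Lra Lia.
From Coquelicot Require Import Coquelicot.
Open Scope R_scope.

(* Write [Psi = (x/2) Q / P], where [P] and [Q] are the power series in [z = x^2/4]
   with positive coefficients [1 / (k! Gamma (k + nu + 1))] and [1 / (k! Gamma (k + nu + 2))].
   Differentiating gives the Riccati equation [Psi' = 1 - (2 nu + 1) Psi / x - Psi^2], and two
   Cauchy-Schwarz (variance) inequalities for the weights of [P] keep [g = x (1 - Psi)] in
   [[0, 2 (nu + 1)]].  For [g] the Riccati equation reads
   [g' = -2 (g - (2 nu + 1)/2) + O(1/x)], which forces [g -> (2 nu + 1)/2].  Hence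
   [x ln Psi -> -(2 nu + 1)/2] and [x ln (1 - 2 Psi / x) -> -2], and [lambda] is their quotient. *)

Lemma exp_le_compat (x y : R) : x <= y -> exp x <= exp y.
Proof. intros [Hlt | ->]; [left; apply exp_increasing |]; lra. Qed.

Lemma ln_le_sub_1 (y : R) : 0 < y -> ln y <= y - 1.
Proof.
  intros Hy. rewrite <- (ln_exp (y - 1)). apply ln_le; [exact Hy |].
  pose proof (exp_ineq1_le (y - 1)). lra.
Qed.

Lemma ln_ge_1_sub_inv (y : R) : 0 < y -> 1 - / y <= ln y.
Proof.
  intros Hy. pose proof (ln_le_sub_1 _ (Rinv_0_lt_compat _ Hy)).
  rewrite ln_Rinv in H by exact Hy. lra.
Qed.

Lemma ln_le_2_sqrt (t : R) : 0 < t -> ln t <= 2 * sqrt t.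
Proof.
  intros Ht. pose proof (sqrt_lt_R0 t Ht).
  rewrite <- (sqrt_sqrt t) at 1 by lra.
  rewrite ln_mult by lra. pose proof (ln_le_sub_1 _ H). lra.
Qed.

Lemma exp_neg_mul_1_add_le_1 (y : R) : 0 <= y -> exp (- y) * (1 + y) <= 1.
Proof.
  intros Hy. pose proof (exp_ineq1_le y). pose proof (exp_pos (- y)).
  assert (exp (- y) * exp y = 1) by (rewrite <- exp_plus, Rplus_opp_l; apply exp_0).
  nra.
Qed.

Lemma is_derive_Rpower_l (a t : R) : 0 < t ->
  is_derive (fun x => Rpower x a) t (a * Rpower t (a - 1)).
Proof. intros Ht. apply is_derive_Reals, derivable_pt_lim_power, Ht. Qed.

Lemma is_derive_eq (f : R -> R) (x l l' : R) : is_derive f x l -> l = l' -> is_derive f x l'.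
Proof. intros H <-; exact H. Qed.

Lemma nonincreasing_of_derive_nonpos (f df : R -> R) (a b : R) : a <= b ->
  (forall x, a <= x <= b -> is_derive f x (df x)) ->
  (forall x, a <= x <= b -> df x <= 0) -> f b <= f a.
Proof.
  intros Hab Hd Hneg.
  assert (Hin : forall x, Rmin a b <= x <= Rmax a b -> a <= x <= b)
    by (rewrite Rmin_left, Rmax_right by exact Hab; auto).
  destruct (MVT_gen f a b df) as [c [Hc E]].
  - intros x Hx. apply Hd, Hin. lra.
  - intros x Hx. apply continuity_pt_filterlim, (ex_derive_continuous f).
    exists (df x). apply Hd, Hin, Hx.
  - specialize (Hneg c (Hin c Hc)). nra.
Qed.

(* [exp (c y) * (h y - d / c)] is nonincreasing, since its derivative is
   [exp (c y) * (r y - d)]. *)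
Lemma linear_ode_upper_bound (h r : R -> R) (c d a x : R) : 0 < c -> a <= x ->
  (forall y, a <= y <= x -> is_derive h y (- c * h y + r y)) ->
  (forall y, a <= y <= x -> r y <= d) ->
  h x <= d / c + exp (- c * (x - a)) * (h a - d / c).
Proof.
  intros Hc Hax Hd Hr.
  pose proof (nonincreasing_of_derive_nonpos (fun y => exp (c * y) * (h y - d / c))
    (fun y => exp (c * y) * (r y - d)) a x Hax) as Hmono.
  assert (Hcmp : exp (c * x) * (h x - d / c) <= exp (c * a) * (h a - d / c)).
  { apply Hmono.
    - intros y Hy. eapply is_derive_eq.
      + apply (is_derive_mult (fun y => exp (c * y)) (fun y => h y - d / c)).
        * auto_derive; reflexivity.
        * apply (is_derive_plus h (fun _ => - (d / c))); [apply Hd, Hy | apply is_derive_const].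
        * intros; apply Rmult_comm.
      + unfold plus, mult, zero; simpl. field. lra.
    - intros y Hy. pose proof (Hr y Hy). pose proof (exp_pos (c * y)). nra. }
  assert (Hsplit : exp (c * a) = exp (c * x) * exp (- c * (x - a)))
    by (rewrite <- exp_plus; f_equal; ring).
  rewrite Hsplit in Hcmp. pose proof (exp_pos (c * x)).
  apply Rmult_le_reg_l with (exp (c * x)); [lra |]. nra.
Qed.

Lemma linear_ode_bound (h r : R -> R) (c d a x : R) : 0 < c -> a <= x ->
  (forall y, a <= y <= x -> is_derive h y (- c * h y + r y)) ->
  (forall y, a <= y <= x -> Rabs (r y) <= d) ->
  Rabs (h x) <= d / c + exp (- c * (x - a)) * Rabs (h a).
Proof.
  intros Hc Hax Hd Hr.
  assert (Hd0 : 0 <= d) by (apply Rle_trans with (Rabs (r a)); [apply Rabs_pos | apply Hr; lra]).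
  assert (Hdc : 0 <= d / c) by (apply Rdiv_le_0_compat; lra).
  assert (Hexp1 : exp (- c * (x - a)) <= 1) by (rewrite <- exp_0; apply exp_le_compat; nra).
  pose proof (exp_pos (- c * (x - a))).
  pose proof (Rle_abs (h a)). pose proof (Rle_abs (- h a)). rewrite Rabs_Ropp in *.
  pose proof (linear_ode_upper_bound h r c d a x Hc Hax Hd
    (fun y Hy => Rle_trans _ _ _ (Rle_abs _) (Hr y Hy))) as Hup.
  pose proof (linear_ode_upper_bound (fun y => - h y) (fun y => - r y) c d a x Hc Hax) as Hlow.
  assert (Hlow' : - h x <= d / c + exp (- c * (x - a)) * (- h a - d / c)).
  { apply Hlow.
    - intros y Hy. eapply is_derive_eq; [apply (is_derive_opp h), Hd, Hy |].
      unfold opp; simpl. ring.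
    - intros y Hy. apply Rle_trans with (Rabs (r y)); [| apply Hr, Hy].
      rewrite <- Rabs_Ropp. apply Rle_abs. }
  apply Rabs_le. split; nra.
Qed.

Lemma is_lim_linear_ode (h r : R -> R) (c : R) : 0 < c ->
  (forall x, 0 < x -> is_derive h x (- c * h x + r x)) ->
  is_lim r p_infty 0 -> is_lim h p_infty 0.
Proof.
  intros Hc Hd Hr. apply is_lim_spec. intros eps. apply is_lim_spec in Hr.
  set (d := c * eps / 2).
  assert (Hd0 : 0 < d) by (unfold d; pose proof (cond_pos eps); nra).
  destruct (Hr (mkposreal d Hd0)) as [X HX]. simpl in HX.
  set (a := Rmax X 0 + 1).
  assert (Ha : 0 < a /\ X < a) by (unfold a; pose proof (Rmax_l X 0); pose proof (Rmax_r X 0); lra).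
  set (K := Rabs (h a)).
  assert (HK : 0 <= K) by apply Rabs_pos.
  exists (a + 2 * K / (c * eps)). intros x Hx.
  assert (HKx : 2 * K / (c * eps) <= x - a) by lra.
  assert (Hax : a <= x).
  { assert (0 <= 2 * K / (c * eps)); [| lra].
    apply Rdiv_le_0_compat; [lra | pose proof (cond_pos eps); nra]. }
  pose proof (linear_ode_bound h r c d a x Hc Hax) as Hb.
  rewrite Rminus_0_r. eapply Rle_lt_trans; [apply Hb |].
  - intros y Hy. apply Hd. lra.
  - intros y Hy. rewrite <- (Rminus_0_r (r y)). left. apply HX. lra.
  - fold K. replace (- c * (x - a)) with (- (c * (x - a))) by ring.
    pose proof (exp_neg_mul_1_add_le_1 (c * (x - a)) ltac:(nra)).
    pose proof (exp_pos (- (c * (x - a)))). pose proof (cond_pos eps).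
    assert (Hy : 2 * K <= eps * (c * (x - a))).
    { apply Rmult_le_compat_l with (r := c * eps) in HKx; [| nra].
      replace (c * eps * (2 * K / (c * eps))) with (2 * K) in HKx by (field; nra). nra. }
    unfold d. replace (c * eps / 2 / c) with (eps / 2) by (field; lra). nra.
Qed.

Lemma is_lim_div_id (u : R -> R) (l : R) :
  is_lim u p_infty l -> is_lim (fun x => u x / x) p_infty 0.
Proof.
  intros Hu. replace (Finite 0) with (Rbar_mult l 0) by (simpl; f_equal; ring).
  apply (is_lim_mult u (fun x => / x)); [exact Hu | | exact I].
  replace (Finite 0) with (Rbar_inv p_infty) by reflexivity.
  apply is_lim_inv; [apply is_lim_id | discriminate].
Qed.

(* Squeeze with [- y / (1 - y) <= ln (1 - y) <= - y], valid for [y < 1]. *)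
Lemma is_lim_mul_ln_1_sub_div (u : R -> R) (l : R) :
  is_lim u p_infty l -> is_lim (fun x => x * ln (1 - u x / x)) p_infty (- l).
Proof.
  intros Hu. pose proof (is_lim_div_id u l Hu) as Hux.
  assert (Hev : Rbar_locally' p_infty (fun x => 0 < x /\ u x / x < 1)).
  { apply filter_and; [exists 0; auto |].
    apply is_lim_spec in Hux. destruct (Hux (mkposreal 1 Rlt_0_1)) as [M HM].
    exists M. intros x Hx. specialize (HM x Hx). simpl in HM.
    apply Rabs_def2 in HM. lra. }
  apply (is_lim_le_le_loc (fun x => - (u x / (1 - u x / x))) (fun x => - u x)).
  - revert Hev. apply filter_imp. intros x [Hx Hux1].
    assert (Hlt : u x < x).
    { replace (u x) with (u x / x * x) by (field; lra). nra. }
    pose proof (ln_le_sub_1 (1 - u x / x) ltac:(lra)).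
    pose proof (ln_ge_1_sub_inv (1 - u x / x) ltac:(lra)). split.
    + replace (- (u x / (1 - u x / x))) with (x * (1 - / (1 - u x / x))) by (field; lra).
      apply Rmult_le_compat_l; lra.
    + replace (- u x) with (x * (1 - u x / x - 1)) by (field; lra).
      apply Rmult_le_compat_l; lra.
  - replace (Finite (- l)) with (Rbar_opp (Rbar_div l (1 - 0))) by (simpl; f_equal; field).
    apply is_lim_opp, is_lim_div; [exact Hu | | simpl; intros E; injection E; lra | exact I].
    apply (is_lim_minus _ _ _ 1 0); [apply is_lim_const | exact Hux | reflexivity].
  - replace (Finite (- l)) with (Rbar_opp l) by reflexivity. apply is_lim_opp, Hu.
Qed.

Lemma quadratic_nonneg_discr (a b c : R) : 0 < c ->
  (forall m, 0 <= a - 2 * b * m + c * m ^ 2) -> b ^ 2 <= a * c.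
Proof.
  intros Hc H. specialize (H (b / c)).
  replace (a - 2 * b * (b / c) + c * (b / c) ^ 2) with ((a * c - b ^ 2) * / c) in H
    by (field; lra).
  pose proof (Rinv_0_lt_compat c Hc). nra.
Qed.

Lemma is_series_shift (a : nat -> R) (l : R) :
  a O = 0 -> is_series (fun k => a (S k)) l -> is_series a l.
Proof.
  intros H0 H. apply (is_series_decr_1 (V := R_NormedModule)).
  rewrite H0. unfold plus, opp; simpl. replace (l + - 0) with l by ring. exact H.
Qed.

Lemma is_series_nonneg (a : nat -> R) (l : R) :
  is_series a l -> (forall k, 0 <= a k) -> 0 <= l.
Proof.
  intros H Ha. rewrite <- (is_series_unique a l H).
  rewrite <- (Rmult_0_l (Series a)), <- Series_scal_l.
  apply Series_le; [| exists l; exact H].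
  intros k. rewrite Rmult_0_l. split; [lra | apply Ha].
Qed.

Lemma is_series_pos (a : nat -> R) (l : R) :
  is_series a l -> (forall k, 0 <= a k) -> 0 < a O -> 0 < l.
Proof.
  intros H Ha Ha0.
  assert (Htail : is_series (fun k => a (S k)) (l - a O)).
  { apply (is_series_incr_1 (V := R_NormedModule)).
    unfold plus; simpl. replace (l - a O + a O) with l by ring. exact H. }
  pose proof (is_series_nonneg _ _ Htail (fun k => Ha (S k))). lra.
Qed.

Lemma is_series_nonneg_comb (u v w : nat -> R) (lu lv lw p q : R) :
  is_series u lu -> is_series v lv -> is_series w lw ->
  (forall k, 0 <= u k + p * v k + q * w k) -> 0 <= lu + p * lv + q * lw.
Proof.
  intros Hu Hv Hw Hk.
  pose proof (is_series_plus _ _ _ _ (is_series_plus _ _ _ _ Hu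
    (is_series_scal (V := R_NormedModule) p _ _ Hv))
    (is_series_scal (V := R_NormedModule) q _ _ Hw))
    as H.
  apply (is_series_nonneg _ _ H). exact Hk.
Qed.

(** * The Gamma function *)

Definition gamma_integrand (s t : R) : R := Rpower t (s - 1) * exp (- t).

Lemma gamma_integrand_pos (s t : R) : 0 < gamma_integrand s t.
Proof. apply Rmult_lt_0_compat; apply exp_pos. Qed.

Lemma ex_derive_gamma_integrand (s t : R) : 0 < t -> ex_derive (gamma_integrand s) t.
Proof.
  intros Ht. apply ex_derive_mult.
  - eexists. apply is_derive_Rpower_l, Ht.
  - auto_derive; auto.
Qed.

Lemma continuous_gamma_integrand (s t : R) : 0 < t -> continuous (gamma_integrand s) t.
Proof.
  intros Ht. apply (ex_derive_continuous (gamma_integrand s)), ex_derive_gamma_integrand, Ht.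
Qed.

Lemma ex_RInt_gamma_integrand (s a b : R) : 0 < a -> 0 < b ->
  ex_RInt (gamma_integrand s) a b.
Proof.
  intros Ha Hb. apply (@ex_RInt_continuous R_CompleteNormedModule). intros t [Ht _].
  apply continuous_gamma_integrand. revert Ht; apply Rlt_le_trans, Rmin_glb_lt; assumption.
Qed.

(* From [(s-1) ln t <= 2 (s-1) sqrt t <= 2 (s-1)^2 + t/2]. *)
Lemma gamma_integrand_le (s t : R) : 1 <= s -> 0 < t ->
  gamma_integrand s t <= exp (2 * (s - 1) ^ 2) * exp (- t / 2).
Proof.
  intros Hs Ht. unfold gamma_integrand, Rpower. rewrite <- !exp_plus.
  apply exp_le_compat.
  pose proof (ln_le_2_sqrt t Ht). pose proof (sqrt_sqrt t (Rlt_le _ _ Ht)).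
  assert ((s - 1) * ln t <= (s - 1) * (2 * sqrt t)) by (apply Rmult_le_compat_l; lra).
  pose proof (pow2_ge_0 (sqrt t - 2 * (s - 1))). nra.
Qed.

Lemma RInt_gamma_integrand_le (s a b : R) : 1 <= s -> 0 < a -> a <= b ->
  RInt (gamma_integrand s) a b <= 2 * exp (2 * (s - 1) ^ 2).
Proof.
  intros Hs Ha Hab. set (C := exp (2 * (s - 1) ^ 2)).
  assert (Hexp : is_RInt (fun t => C * exp (- t / 2)) a b
                   (C * (2 * exp (- a / 2) - 2 * exp (- b / 2)))).
  { replace (C * (2 * exp (- a / 2) - 2 * exp (- b / 2)))
      with (minus ((fun t => - 2 * C * exp (- t / 2)) b) ((fun t => - 2 * C * exp (- t / 2)) a))
      by (unfold minus, plus, opp; simpl; ring).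
    apply (@is_RInt_derive R_CompleteNormedModule (fun t => - 2 * C * exp (- t / 2))).
    - intros t _. auto_derive; [auto | unfold Rdiv; field].
    - intros t _. apply (ex_derive_continuous (fun t => C * exp (- t / 2))). auto_derive; auto. }
  apply Rle_trans with (C * (2 * exp (- a / 2) - 2 * exp (- b / 2))).
  - apply (is_RInt_le (gamma_integrand s) (fun t => C * exp (- t / 2)) a b); [lra | | exact Hexp |].
    + apply (@RInt_correct R_CompleteNormedModule), ex_RInt_gamma_integrand; lra.
    + intros t Ht. apply gamma_integrand_le; lra.
  - assert (exp (- a / 2) <= 1) by (rewrite <- exp_0; apply exp_le_compat; lra).
    assert (0 < C) by apply exp_pos. pose proof (exp_pos (- b / 2)). nra.
Qed.

Lemma RInt_gamma_integrand_mono (s a b a' b' : R) : 0 < a' -> a' <= a -> a <= b -> b <= b' ->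
  RInt (gamma_integrand s) a b <= RInt (gamma_integrand s) a' b'.
Proof.
  intros Ha' Ha Hab Hb.
  assert (Hnonneg : forall u v, 0 < u -> u <= v -> 0 <= RInt (gamma_integrand s) u v).
  { intros u v Hu Huv. apply RInt_ge_0; [exact Huv | apply ex_RInt_gamma_integrand; lra |].
    intros; apply Rlt_le, gamma_integrand_pos. }
  rewrite <- (RInt_Chasles (gamma_integrand s) a' a b') by (apply ex_RInt_gamma_integrand; lra).
  rewrite <- (RInt_Chasles (gamma_integrand s) a b b') by (apply ex_RInt_gamma_integrand; lra).
  pose proof (Hnonneg a' a Ha' Ha). pose proof (Hnonneg b b' ltac:(lra) Hb).
  unfold plus; simpl. lra.
Qed.

Definition gamma_trunc (s : R) (n : nat) : R :=
  RInt (gamma_integrand s) (/ (INR n + 1)) (INR n + 1).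

Lemma inv_INR_succ_pos (n : nat) : 0 < / (INR n + 1).
Proof. apply Rinv_0_lt_compat. pose proof (pos_INR n). lra. Qed.

Lemma inv_INR_succ_le_1 (n : nat) : / (INR n + 1) <= 1.
Proof.
  rewrite <- Rinv_1. pose proof (pos_INR n). apply Rinv_le_contravar; lra.
Qed.

Lemma inv_INR_succ_le (m n : nat) : (m <= n)%nat -> / (INR n + 1) <= / (INR m + 1).
Proof.
  intros Hmn. pose proof (pos_INR m). pose proof (le_INR _ _ Hmn).
  apply Rinv_le_contravar; lra.
Qed.

Lemma gamma_trunc_incr (s : R) (n : nat) : gamma_trunc s n <= gamma_trunc s (S n).
Proof.
  unfold gamma_trunc. pose proof (inv_INR_succ_le_1 n).
  apply RInt_gamma_integrand_mono.
  - apply inv_INR_succ_pos.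
  - apply inv_INR_succ_le; lia.
  - pose proof (pos_INR n); lra.
  - rewrite S_INR; lra.
Qed.

Lemma ex_finite_lim_gamma_trunc (s : R) : 1 <= s -> ex_finite_lim_seq (gamma_trunc s).
Proof.
  intros Hs. apply (ex_finite_lim_seq_incr _ (2 * exp (2 * (s - 1) ^ 2))).
  - apply gamma_trunc_incr.
  - intros n. pose proof (inv_INR_succ_le_1 n). pose proof (pos_INR n).
    apply RInt_gamma_integrand_le; [exact Hs | apply inv_INR_succ_pos | lra].
Qed.

(* [[a, b]] contains the [N]-th truncation interval and is contained in some [M]-th one. *)
Lemma RInt_gamma_integrand_near_lim (s l : R) : is_lim_seq (gamma_trunc s) l ->
  forall eps : posreal, exists N : nat, forall a b : R,
    0 < a -> a <= / (INR N + 1) -> INR N + 1 <= b ->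
    Rabs (RInt (gamma_integrand s) a b - l) < eps.
Proof.
  intros Hl eps.
  destruct (proj2 (is_lim_seq_spec _ _) Hl eps) as [N HN].
  exists N. intros a b Ha HaN HbN.
  pose proof (inv_INR_succ_le_1 N).
  destruct (INR_unbounded (/ a)) as [M1 HM1].
  destruct (INR_unbounded b) as [M2 HM2].
  set (M := Nat.max M1 M2).
  assert (Hlow : gamma_trunc s N <= RInt (gamma_integrand s) a b).
  { pose proof (pos_INR N). unfold gamma_trunc. apply RInt_gamma_integrand_mono; lra. }
  assert (Hup : RInt (gamma_integrand s) a b <= gamma_trunc s M).
  { pose proof (pos_INR N). apply RInt_gamma_integrand_mono.
    - apply inv_INR_succ_pos.
    - apply Rle_trans with (/ (INR M1 + 1)); [apply inv_INR_succ_le, Nat.le_max_l |].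
      rewrite <- (Rinv_inv a). apply Rinv_le_contravar; [apply Rinv_0_lt_compat; lra | lra].
    - lra.
    - assert (INR M2 <= INR M) by apply le_INR, Nat.le_max_r. lra. }
  pose proof (is_lim_seq_incr_compare _ _ Hl (gamma_trunc_incr s) M) as HM.
  specialize (HN N (le_n N)). apply Rabs_def2 in HN.
  clearbody M. clear - Hlow Hup HM HN. apply Rabs_def1; lra.
Qed.

Lemma is_RInt_gen_gamma_trunc_lim (s l : R) : is_lim_seq (gamma_trunc s) l ->
  is_RInt_gen (gamma_integrand s) (at_right 0) (Rbar_locally p_infty) l.
Proof.
  intros Hl. apply filterlimi_locally. intros eps.
  destruct (RInt_gamma_integrand_near_lim s l Hl eps) as [N HN].
  apply (Filter_prod _ _ _ (fun a => 0 < a <= / (INR N + 1)) (fun b => INR N + 1 < b)).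
  - exists (mkposreal _ (inv_INR_succ_pos N)). intros a Ha Ha0.
    apply Rabs_def2 in Ha. simpl in Ha. rewrite Rminus_0_r in Ha. lra.
  - exists (INR N + 1). auto.
  - intros a b [Ha0 HaN] Hb. exists (RInt (gamma_integrand s) a b). split.
    + apply (@RInt_correct R_CompleteNormedModule), ex_RInt_gamma_integrand;
        pose proof (pos_INR N); simpl; lra.
    + apply HN; simpl; lra.
Qed.

Lemma is_lim_seq_gamma_trunc (s : R) : 1 <= s -> is_lim_seq (gamma_trunc s) (Gamma s).
Proof.
  intros Hs. destruct (ex_finite_lim_gamma_trunc s Hs) as [l Hl].
  replace (Gamma s) with l; [exact Hl |].
  symmetry. unfold Gamma. fold (gamma_integrand s).
  apply (@is_RInt_gen_unique R_CompleteNormedModule).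
  - apply Proper_StrongProper, at_right_proper_filter.
  - apply Proper_StrongProper, Rbar_locally_filter.
  - apply is_RInt_gen_gamma_trunc_lim, Hl.
Qed.

Lemma Gamma_correct (s : R) : 1 <= s ->
  is_RInt_gen (gamma_integrand s) (at_right 0) (Rbar_locally p_infty) (Gamma s).
Proof. intros Hs. apply is_RInt_gen_gamma_trunc_lim, is_lim_seq_gamma_trunc, Hs. Qed.

Lemma Gamma_pos (s : R) : 1 <= s -> 0 < Gamma s.
Proof.
  intros Hs.
  apply Rlt_le_trans with (gamma_trunc s 1);
    [| apply (is_lim_seq_incr_compare _ _ (is_lim_seq_gamma_trunc s Hs) (gamma_trunc_incr s))].
  pose proof (inv_INR_succ_pos 1) as Hpos. pose proof (inv_INR_succ_le_1 1) as Hle.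
  simpl INR in Hpos, Hle. unfold gamma_trunc. simpl INR. apply RInt_gt_0.
  - lra.
  - intros t _. apply gamma_integrand_pos.
  - intros t Ht. apply continuous_gamma_integrand. lra.
Qed.

Lemma filter_prod_pos (P : R -> Prop) : (forall x, 0 < x -> P x) ->
  filter_prod (at_right 0) (Rbar_locally p_infty)
    (fun ab => forall x, Rmin (fst ab) (snd ab) <= x <= Rmax (fst ab) (snd ab) -> P x).
Proof.
  intros HP. apply (Filter_prod _ _ _ (fun a => 0 < a) (fun b => 0 < b)).
  - exists (mkposreal 1 Rlt_0_1). auto.
  - exists 0. auto.
  - intros a b Ha Hb x [Hx _]. apply HP.
    apply Rlt_le_trans with (Rmin a b); [apply Rmin_glb_lt |]; assumption.
Qed.

Lemma filterlim_Rpower_mul_exp_neg_0 (s : R) : 1 <= s ->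
  filterlim (fun t => Rpower t s * exp (- t)) (at_right 0) (locally 0).
Proof.
  intros Hs. apply filterlim_locally. intros eps.
  exists (mkposreal _ (Rmin_pos _ _ (cond_pos eps) Rlt_0_1)). intros t Ht Ht0.
  apply Rabs_def2 in Ht. simpl in Ht. rewrite Rminus_0_r in Ht.
  pose proof (Rmin_l eps 1). pose proof (Rmin_r eps 1).
  assert (Hpow : Rpower t s <= t).
  { assert (ln t <= 0) by (rewrite <- ln_1; apply ln_le; lra).
    unfold Rpower. rewrite <- (exp_ln t) at 2 by lra. apply exp_le_compat. nra. }
  assert (exp (- t) <= 1) by (rewrite <- exp_0; apply exp_le_compat; lra).
  assert (0 < Rpower t s) by apply exp_pos. pose proof (exp_pos (- t)).
  apply Rabs_def1; simpl; rewrite ?Rminus_0_r; nra.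
Qed.

Lemma is_lim_Rpower_mul_exp_neg_infty (s : R) : 1 <= s ->
  is_lim (fun t => Rpower t s * exp (- t)) p_infty 0.
Proof.
  intros Hs. set (C := exp (2 * s ^ 2)).
  apply (is_lim_le_le_loc (fun _ => 0) (fun t => C * exp (- t / 2))).
  - exists 0. intros t Ht. split.
    + apply Rmult_le_pos; left; apply exp_pos.
    + pose proof (gamma_integrand_le (s + 1) t ltac:(lra) Ht) as H.
      unfold gamma_integrand in H. replace (s + 1 - 1) with s in H by ring. exact H.
  - apply is_lim_const.
  - replace (Finite 0) with (Rbar_mult C 0) by (simpl; f_equal; ring).
    apply is_lim_scal_l. apply (is_lim_comp exp (fun t => - t / 2) p_infty 0 m_infty).
    + apply is_lim_exp_m.
    + apply is_lim_spec. intros M. exists (- 2 * M). intros t Ht. lra.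
    + exists 0. intros. discriminate.
Qed.

Lemma is_derive_Rpower_mul_exp_neg (s t : R) : 0 < t ->
  is_derive (fun x => - (Rpower x s * exp (- x))) t
    (gamma_integrand (s + 1) t - s * gamma_integrand s t).
Proof.
  intros Ht. unfold gamma_integrand. replace (s + 1 - 1) with s by ring.
  eapply is_derive_eq.
  - apply (is_derive_opp (fun x => Rpower x s * exp (- x))).
    apply (is_derive_mult (fun x => Rpower x s) (fun x => exp (- x))).
    + apply is_derive_Rpower_l, Ht.
    + auto_derive; auto.
    + intros; apply Rmult_comm.
  - unfold opp, plus, mult; simpl. ring.
Qed.

Lemma is_RInt_gen_Derive_Rpower_mul_exp_neg (s : R) : 1 <= s ->
  is_RInt_gen (Derive (fun x => - (Rpower x s * exp (- x))))
    (at_right 0) (Rbar_locally p_infty) (0 - 0).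
Proof.
  intros Hs. set (F := fun x => - (Rpower x s * exp (- x))).
  set (dF := fun u => gamma_integrand (s + 1) u - s * gamma_integrand s u).
  assert (HF0 : forall G, filterlim (fun t => Rpower t s * exp (- t)) G (locally 0) ->
                  filterlim F G (locally 0)).
  { intros G HG. replace (locally 0) with (locally (- 0)) by (f_equal; ring).
    apply (filterlim_comp _ _ _ _ Ropp _ (locally 0) _ HG), (filterlim_opp 0). }
  apply is_RInt_gen_Derive.
  - apply filter_prod_pos. intros t Ht. eexists. apply is_derive_Rpower_mul_exp_neg, Ht.
  - apply filter_prod_pos. intros t Ht. apply (continuous_ext_loc _ dF).
    + apply (locally_open (fun u => 0 < u)); [apply open_gt | | exact Ht].
      intros u Hu. symmetry. apply is_derive_unique, is_derive_Rpower_mul_exp_neg, Hu.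
    + apply (ex_derive_continuous dF).
      apply (ex_derive_minus (gamma_integrand (s + 1)) (fun u => s * gamma_integrand s u));
        [| apply (ex_derive_scal (gamma_integrand s))]; apply ex_derive_gamma_integrand, Ht.
  - apply HF0, filterlim_Rpower_mul_exp_neg_0, Hs.
  - apply HF0, is_lim_Rpower_mul_exp_neg_infty, Hs.
Qed.

(* Integration by parts against [t^s e^(-t)], whose boundary terms vanish. *)
Lemma Gamma_succ (s : R) : 1 <= s -> Gamma (s + 1) = s * Gamma s.
Proof.
  intros Hs.
  pose proof (is_RInt_gen_plus _ _ _ _ (is_RInt_gen_Derive_Rpower_mul_exp_neg s Hs)
    (is_RInt_gen_scal _ s _ (Gamma_correct s Hs))) as Hsum.
  assert (Hsucc : is_RInt_gen (gamma_integrand (s + 1)) (at_right 0) (Rbar_locally p_infty)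
                    (s * Gamma s)).
  { replace (s * Gamma s) with (plus (0 - 0) (scal s (Gamma s)))
      by (unfold plus, scal; simpl; unfold mult; simpl; ring).
    eapply is_RInt_gen_ext; [| exact Hsum].
    eapply filter_imp; [| apply (filter_prod_pos (fun t =>
      plus (Derive (fun x => - (Rpower x s * exp (- x))) t) (scal s (gamma_integrand s t))
      = gamma_integrand (s + 1) t))].
    - intros [a b] H x Hx. apply H. simpl in *. lra.
    - intros t Ht.
      replace (Derive (fun x => - (Rpower x s * exp (- x))) t)
        with (gamma_integrand (s + 1) t - s * gamma_integrand s t)
        by (symmetry; apply is_derive_unique, is_derive_Rpower_mul_exp_neg, Ht).
      unfold plus, scal; simpl; unfold mult; simpl. ring. }
  unfold Gamma at 1. fold (gamma_integrand (s + 1)).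
  apply (@is_RInt_gen_unique R_CompleteNormedModule); [| | exact Hsucc].
  - apply Proper_StrongProper, at_right_proper_filter.
  - apply Proper_StrongProper, Rbar_locally_filter.
Qed.

(** * The Bessel power series *)

Definition bessel_coef (mu : R) (k : nat) : R :=
  / (INR (Factorial.fact k) * Gamma (INR k + mu + 1)).

Lemma INR_fact_pos (k : nat) : 0 < INR (Factorial.fact k).
Proof. apply lt_0_INR, Factorial.lt_O_fact. Qed.

Lemma bessel_coef_pos (mu : R) (k : nat) : 0 <= mu -> 0 < bessel_coef mu k.
Proof.
  intros Hmu. apply Rinv_0_lt_compat, Rmult_lt_0_compat; [apply INR_fact_pos |].
  apply Gamma_pos. pose proof (pos_INR k). lra.
Qed.

Lemma bessel_coef_succ_order (mu : R) (k : nat) : 0 <= mu ->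
  bessel_coef (mu + 1) k = bessel_coef mu k / (INR k + mu + 1).
Proof.
  intros Hmu. unfold bessel_coef. pose proof (pos_INR k).
  replace (INR k + (mu + 1) + 1) with (INR k + mu + 1 + 1) by ring.
  rewrite Gamma_succ by lra.
  pose proof (INR_fact_pos k). pose proof (Gamma_pos (INR k + mu + 1) ltac:(lra)).
  field. repeat split; lra.
Qed.

(* No hypothesis on [mu]: if the Gamma factor vanishes both sides are [/ 0 = 0]. *)
Lemma bessel_coef_succ_index (mu : R) (k : nat) :
  INR (S k) * bessel_coef mu (S k) = bessel_coef (mu + 1) k.
Proof.
  unfold bessel_coef. change (Factorial.fact (S k)) with (S k * Factorial.fact k)%nat.
  rewrite mult_INR.
  replace (INR (S k) + mu + 1) with (INR k + (mu + 1) + 1) by (rewrite S_INR; ring).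
  assert (INR (S k) <> 0) by (apply not_0_INR; discriminate).
  destruct (Req_dec (Gamma (INR k + (mu + 1) + 1)) 0) as [H0 | H0].
  - rewrite H0, !Rmult_0_r, Rinv_0. ring.
  - pose proof (INR_fact_pos k). field. repeat split; lra.
Qed.

Lemma bessel_coef_ratio (mu : R) (k : nat) : 0 <= mu ->
  bessel_coef mu (S k) / bessel_coef mu k = / (INR (S k) * (INR k + mu + 1)).
Proof.
  intros Hmu. pose proof (bessel_coef_succ_index mu k) as H.
  rewrite bessel_coef_succ_order in H by exact Hmu.
  pose proof (bessel_coef_pos mu k Hmu). pose proof (pos_INR k).
  assert (0 < INR (S k)) by (apply lt_0_INR; lia).
  rewrite <- (Rmult_1_l (bessel_coef mu (S k))), <- (Rinv_l (INR (S k))) by lra.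
  rewrite Rmult_assoc, H. field. repeat split; lra.
Qed.

Lemma CV_radius_bessel_coef (mu : R) : 0 <= mu -> CV_radius (bessel_coef mu) = p_infty.
Proof.
  intros Hmu. apply CV_radius_infinite_DAlembert.
  - intros k. pose proof (bessel_coef_pos mu k Hmu). lra.
  - apply is_lim_seq_le_le with (u := fun _ => 0) (w := fun k => / INR (S k)).
    + intros k. rewrite bessel_coef_ratio by exact Hmu. pose proof (pos_INR k).
      assert (0 < INR (S k)) by (apply lt_0_INR; lia).
      rewrite Rabs_right by (left; apply Rinv_0_lt_compat, Rmult_lt_0_compat; lra).
      split; [left; apply Rinv_0_lt_compat, Rmult_lt_0_compat; lra |].
      apply Rinv_le_contravar; [lra |]. nra.
    + apply is_lim_seq_const.
    + replace (Finite 0) with (Rbar_inv p_infty) by reflexivity.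
      apply is_lim_seq_inv; [| discriminate].
      apply (is_lim_seq_incr_1 INR), is_lim_seq_INR.
Qed.

Lemma is_series_bessel (mu z : R) : 0 <= mu ->
  is_series (fun k => bessel_coef mu k * z ^ k) (PSeries (bessel_coef mu) z).
Proof.
  intros Hmu. apply Series_correct, ex_pseries_R, CV_radius_inside.
  rewrite CV_radius_bessel_coef by exact Hmu. exact I.
Qed.

Lemma PSeries_bessel_pos (mu z : R) : 0 <= mu -> 0 <= z -> 0 < PSeries (bessel_coef mu) z.
Proof.
  intros Hmu Hz. apply (is_series_pos _ _ (is_series_bessel mu z Hmu)).
  - intros k. apply Rmult_le_pos; [left; apply bessel_coef_pos, Hmu | apply pow_le, Hz].
  - rewrite pow_O, Rmult_1_r. apply bessel_coef_pos, Hmu.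
Qed.

Lemma is_series_bessel_index (mu z : R) : 0 <= mu ->
  is_series (fun k => INR k * (bessel_coef mu k * z ^ k)) (z * PSeries (bessel_coef (mu + 1)) z).
Proof.
  intros Hmu. apply is_series_shift; [simpl; ring |].
  apply (is_series_ext (fun k => scal z (bessel_coef (mu + 1) k * z ^ k))).
  - intros k. rewrite <- bessel_coef_succ_index. unfold scal; simpl; unfold mult; simpl. ring.
  - apply (is_series_scal (V := R_NormedModule)), is_series_bessel. lra.
Qed.

Lemma is_series_bessel_index_mul_index_add (mu z : R) : 0 <= mu ->
  is_series (fun k => INR k * (INR k + mu) * (bessel_coef mu k * z ^ k))
    (z * PSeries (bessel_coef mu) z).
Proof.
  intros Hmu. apply is_series_shift; [simpl; ring |].
  apply (is_series_ext (fun k => scal z (bessel_coef mu k * z ^ k))).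
  - intros k. pose proof (bessel_coef_succ_index mu k) as H.
    rewrite bessel_coef_succ_order in H by exact Hmu.
    pose proof (pos_INR k). rewrite S_INR in *.
    replace (bessel_coef mu k)
      with ((INR k + mu + 1) * ((INR k + 1) * bessel_coef mu (S k))) by (rewrite H; field; lra).
    unfold scal; simpl; unfold mult; simpl. ring.
  - apply (is_series_scal (V := R_NormedModule)), is_series_bessel, Hmu.
Qed.

Lemma PSeries_bessel_recurrence (mu z : R) : 0 <= mu ->
  PSeries (bessel_coef mu) z - (mu + 1) * PSeries (bessel_coef (mu + 1)) z
  = z * PSeries (bessel_coef (mu + 1 + 1)) z.
Proof.
  intros Hmu.
  pose proof (is_series_plus _ _ _ _ (is_series_bessel_index (mu + 1) z ltac:(lra))
    (is_series_scal (V := R_NormedModule) (mu + 1) _ _ (is_series_bessel (mu + 1) z ltac:(lra))))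
    as Hsum.
  assert (E : PSeries (bessel_coef mu) z
              = plus (z * PSeries (bessel_coef (mu + 1 + 1)) z)
                     (scal (mu + 1) (PSeries (bessel_coef (mu + 1)) z))).
  { apply is_series_unique. eapply is_series_ext; [| exact Hsum].
    intros k. unfold plus, scal; simpl; unfold mult; simpl.
    rewrite bessel_coef_succ_order by exact Hmu. pose proof (pos_INR k). field. lra. }
  rewrite E. unfold plus, scal; simpl; unfold mult; simpl. ring.
Qed.

Lemma is_derive_PSeries_bessel (mu z : R) : 0 <= mu ->
  is_derive (PSeries (bessel_coef mu)) z (PSeries (bessel_coef (mu + 1)) z).
Proof.
  intros Hmu. rewrite <- (PSeries_ext (PS_derive (bessel_coef mu))).
  - apply is_derive_PSeries. rewrite CV_radius_bessel_coef by exact Hmu. exact I.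
  - intros k. apply bessel_coef_succ_index.
Qed.

Lemma BesselI_eq (mu x : R) : 0 < x ->
  BesselI mu x = Rpower (x / 2) mu * PSeries (bessel_coef mu) (x ^ 2 / 4).
Proof.
  intros Hx. unfold BesselI, PSeries. rewrite <- Series_scal_l. apply Series_ext.
  intros k. unfold bessel_coef. rewrite Rpower_plus.
  replace (2 * INR k) with (INR (2 * k)) by (rewrite mult_INR; reflexivity).
  rewrite Rpower_pow, pow_mult by lra.
  replace ((x / 2) ^ 2) with (x ^ 2 / 4) by field.
  unfold Rdiv at 1. ring.
Qed.

Lemma is_derive_PSeries_bessel_sq (mu x : R) : 0 <= mu ->
  is_derive (fun y => PSeries (bessel_coef mu) (y ^ 2 / 4)) x
    (x / 2 * PSeries (bessel_coef (mu + 1)) (x ^ 2 / 4)).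
Proof.
  intros Hmu. eapply is_derive_eq.
  - apply (is_derive_comp (PSeries (bessel_coef mu)) (fun y => y ^ 2 / 4)).
    + apply is_derive_PSeries_bessel, Hmu.
    + auto_derive; reflexivity.
  - unfold scal; simpl; unfold mult; simpl. field.
Qed.

(* [sum_k (k - m)^2 c_k z^k >= 0] for every [m]. *)
Lemma PSeries_bessel_variance_ineq (mu z : R) : 0 <= mu -> 0 < z ->
  z * PSeries (bessel_coef (mu + 1)) z ^ 2
  <= PSeries (bessel_coef mu) z ^ 2
     - mu * PSeries (bessel_coef mu) z * PSeries (bessel_coef (mu + 1)) z.
Proof.
  intros Hmu Hz. set (A := PSeries (bessel_coef mu) z). set (B := PSeries (bessel_coef (mu + 1)) z).
  assert (HA : 0 < A) by (apply PSeries_bessel_pos; lra).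
  assert (Hq : (z * B) ^ 2 <= (z * A - mu * (z * B)) * A).
  { apply quadratic_nonneg_discr; [exact HA |]. intros m.
    pose proof (is_series_nonneg_comb _ _ _ _ _ _ (- (mu + 2 * m)) (m ^ 2)
      (is_series_bessel_index_mul_index_add mu z Hmu) (is_series_bessel_index mu z Hmu)
      (is_series_bessel mu z Hmu)) as H.
    fold A B in H. replace (z * A - mu * (z * B) - 2 * (z * B) * m + A * m ^ 2)
      with (z * A + - (mu + 2 * m) * (z * B) + m ^ 2 * A) by ring.
    apply H. intros k. pose proof (bessel_coef_pos mu k Hmu). pose proof (pow_le z k ltac:(lra)).
    replace (INR k * (INR k + mu) * (bessel_coef mu k * z ^ k)
      + - (mu + 2 * m) * (INR k * (bessel_coef mu k * z ^ k)) + m ^ 2 * (bessel_coef mu k * z ^ k))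
      with ((INR k - m) ^ 2 * (bessel_coef mu k * z ^ k)) by ring.
    apply Rmult_le_pos; [apply pow2_ge_0 | apply Rmult_le_pos; lra]. }
  assert (z * (z * B ^ 2) <= z * (A ^ 2 - mu * A * B)) by nra.
  apply Rmult_le_reg_l in H; lra.
Qed.

(* [sum_k (k + mu + 1 - m)^2 / (k + mu + 1) c_k z^k >= 0] for every [m]. *)
Lemma PSeries_bessel_inverse_moment_ineq (mu z : R) : 0 <= mu -> 0 <= z ->
  PSeries (bessel_coef mu) z ^ 2
  <= z * PSeries (bessel_coef (mu + 1)) z ^ 2
     + (mu + 1) * PSeries (bessel_coef mu) z * PSeries (bessel_coef (mu + 1)) z.
Proof.
  intros Hmu Hz. set (A := PSeries (bessel_coef mu) z). set (B := PSeries (bessel_coef (mu + 1)) z).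
  assert (HB : 0 < B) by (apply PSeries_bessel_pos; lra).
  assert (Hq : A ^ 2 <= (z * B + (mu + 1) * A) * B).
  { apply quadratic_nonneg_discr; [exact HB |]. intros m.
    pose proof (is_series_nonneg_comb _ _ _ _ _ _ (mu + 1 - 2 * m) (m ^ 2)
      (is_series_bessel_index mu z Hmu) (is_series_bessel mu z Hmu)
      (is_series_bessel (mu + 1) z ltac:(lra))) as H.
    fold A B in H. replace (z * B + (mu + 1) * A - 2 * A * m + B * m ^ 2)
      with (z * B + (mu + 1 - 2 * m) * A + m ^ 2 * B) by ring.
    apply H. intros k. pose proof (bessel_coef_pos mu k Hmu). pose proof (pow_le z k Hz).
    pose proof (pos_INR k). rewrite bessel_coef_succ_order by exact Hmu.
    replace (INR k * (bessel_coef mu k * z ^ k) + (mu + 1 - 2 * m) * (bessel_coef mu k * z ^ k)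
      + m ^ 2 * (bessel_coef mu k / (INR k + mu + 1) * z ^ k))
      with ((INR k + mu + 1 - m) ^ 2 / (INR k + mu + 1) * (bessel_coef mu k * z ^ k))
      by (field; lra).
    apply Rmult_le_pos; [| apply Rmult_le_pos; lra].
    apply Rmult_le_pos; [apply pow2_ge_0 | left; apply Rinv_0_lt_compat; lra]. }
  lra.
Qed.

(** * The ratio [Psi] *)

Definition bessel_ratio (nu x : R) : R :=
  x / 2 * PSeries (bessel_coef (nu + 1)) (x ^ 2 / 4) / PSeries (bessel_coef nu) (x ^ 2 / 4).

Lemma Psi_eq_bessel_ratio (nu x : R) : 0 <= nu -> 0 < x -> Psi nu x = bessel_ratio nu x.
Proof.
  intros Hnu Hx. unfold Psi, bessel_ratio. rewrite !BesselI_eq by exact Hx.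
  rewrite Rpower_plus, Rpower_1 by lra.
  assert (0 < Rpower (x / 2) nu) by apply exp_pos.
  assert (0 < PSeries (bessel_coef nu) (x ^ 2 / 4))
    by (apply PSeries_bessel_pos; [| pose proof (pow2_ge_0 x)]; lra).
  field. lra.
Qed.

Section BesselRatio.

Variable nu : R.
Hypothesis Hnu : 0 <= nu.

Let P (x : R) : R := PSeries (bessel_coef nu) (x ^ 2 / 4).
Let Q (x : R) : R := PSeries (bessel_coef (nu + 1)) (x ^ 2 / 4).

Let P_pos (x : R) : 0 < P x.
Proof. apply PSeries_bessel_pos; [| pose proof (pow2_ge_0 x)]; lra. Qed.

Let Q_pos (x : R) : 0 < Q x.
Proof. apply PSeries_bessel_pos; [| pose proof (pow2_ge_0 x)]; lra. Qed.

Lemma bessel_ratio_pos (x : R) : 0 < x -> 0 < bessel_ratio nu x.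
Proof.
  intros Hx. pose proof (P_pos x). pose proof (Q_pos x).
  apply Rdiv_lt_0_compat; [apply Rmult_lt_0_compat |]; unfold P, Q in *; lra.
Qed.

Lemma bessel_ratio_bounds (x : R) : 0 < x ->
  2 * nu / x * bessel_ratio nu x + bessel_ratio nu x ^ 2 <= 1 /\
  1 <= bessel_ratio nu x ^ 2 + 2 * (nu + 1) / x * bessel_ratio nu x.
Proof.
  intros Hx. assert (Hz : 0 < x ^ 2 / 4) by (pose proof (pow_lt x 2 Hx); lra).
  pose proof (PSeries_bessel_variance_ineq nu _ Hnu Hz) as Hvar.
  pose proof (PSeries_bessel_inverse_moment_ineq nu _ Hnu (Rlt_le _ _ Hz)) as Hinv.
  fold (P x) (Q x) in Hvar, Hinv. pose proof (P_pos x).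
  assert (HQ : Q x = 2 / x * bessel_ratio nu x * P x)
    by (unfold bessel_ratio; fold (P x) (Q x); field; lra).
  rewrite HQ in Hvar, Hinv.
  assert (HP2 : 0 < P x ^ 2) by (apply pow_lt; lra).
  split; apply (Rmult_le_reg_r (P x ^ 2) _ _ HP2).
  - replace ((2 * nu / x * bessel_ratio nu x + bessel_ratio nu x ^ 2) * P x ^ 2)
      with (x ^ 2 / 4 * (2 / x * bessel_ratio nu x * P x) ^ 2
            + nu * P x * (2 / x * bessel_ratio nu x * P x)) by (field; lra).
    lra.
  - replace ((bessel_ratio nu x ^ 2 + 2 * (nu + 1) / x * bessel_ratio nu x) * P x ^ 2)
      with (x ^ 2 / 4 * (2 / x * bessel_ratio nu x * P x) ^ 2
            + (nu + 1) * P x * (2 / x * bessel_ratio nu x * P x)) by (field; lra).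
    lra.
Qed.

(* With [R] the series of order [nu + 2]: [P' = (x/2) Q], [Q' = (x/2) R] and
   [P - (nu + 1) Q = (x^2/4) R]. *)
Lemma is_derive_bessel_ratio (x : R) : 0 < x ->
  is_derive (bessel_ratio nu) x
    (1 - (2 * nu + 1) / x * bessel_ratio nu x - bessel_ratio nu x ^ 2).
Proof.
  intros Hx.
  pose proof (is_derive_PSeries_bessel_sq nu x Hnu) as HP.
  pose proof (is_derive_PSeries_bessel_sq (nu + 1) x ltac:(lra)) as HQ.
  pose proof (PSeries_bessel_recurrence nu (x ^ 2 / 4) Hnu) as Hrec.
  fold (P x) (Q x) in HP, HQ, Hrec.
  pose proof (P_pos x).
  eapply is_derive_eq.
  - apply (is_derive_div (fun y => y / 2 * Q y) P).
    + apply (is_derive_mult (fun y => y / 2) Q); [auto_derive; reflexivity | exact HQ |].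
      intros; apply Rmult_comm.
    + exact HP.
    + lra.
  - unfold bessel_ratio. fold (P x) (Q x).
    replace (PSeries (bessel_coef (nu + 1 + 1)) (x ^ 2 / 4))
      with ((P x - (nu + 1) * Q x) / (x ^ 2 / 4))
      by (rewrite Hrec; field; lra).
    unfold plus, mult; simpl. field. lra.
Qed.

End BesselRatio.

(** * Asymptotics *)

Definition bessel_ratio_defect (nu x : R) : R := x * (1 - bessel_ratio nu x).

Section BesselRatioDefect.

Variable nu : R.
Hypothesis Hnu : 0 <= nu.

Lemma bessel_ratio_eq_defect (x : R) : 0 < x ->
  bessel_ratio nu x = 1 - bessel_ratio_defect nu x / x.
Proof. intros Hx. unfold bessel_ratio_defect. field. lra. Qed.

Lemma bessel_ratio_defect_bounds (x : R) : 0 < x ->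
  0 <= bessel_ratio_defect nu x <= 2 * (nu + 1).
Proof.
  intros Hx. unfold bessel_ratio_defect.
  pose proof (bessel_ratio_pos nu Hnu x Hx).
  destruct (bessel_ratio_bounds nu Hnu x Hx) as [Hupper Hlower].
  set (p := bessel_ratio nu x) in *.
  assert (0 <= 2 * nu / x * p) by (apply Rmult_le_pos; [apply Rdiv_le_0_compat |]; lra).
  assert (Hp1 : p <= 1) by nra.
  assert (Hdefect : x * (1 - p) <= x * (2 * (nu + 1) / x * p)) by (apply Rmult_le_compat_l; nra).
  replace (x * (2 * (nu + 1) / x * p)) with (2 * (nu + 1) * p) in Hdefect by (field; lra).
  split; nra.
Qed.

Lemma is_derive_bessel_ratio_defect (x : R) : 0 < x ->
  is_derive (bessel_ratio_defect nu) x
    (- 2 * (bessel_ratio_defect nu x - (2 * nu + 1) / 2)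
     + (bessel_ratio_defect nu x ^ 2 - 2 * nu * bessel_ratio_defect nu x) / x).
Proof.
  intros Hx. eapply is_derive_eq.
  - apply (is_derive_mult (fun y => y) (fun y => 1 - bessel_ratio nu y)).
    + apply (is_derive_id (K := R_AbsRing)).
    + apply (is_derive_minus (fun _ => 1));
        [apply is_derive_const | apply is_derive_bessel_ratio; assumption].
    + intros; apply Rmult_comm.
  - unfold bessel_ratio_defect, minus, plus, mult, opp, one, zero; simpl. field. lra.
Qed.

Lemma is_lim_bessel_ratio_defect :
  is_lim (bessel_ratio_defect nu) p_infty ((2 * nu + 1) / 2).
Proof.
  set (K := 4 * (nu + 1) ^ 2 + 4 * nu * (nu + 1)).
  set (r := fun x => (bessel_ratio_defect nu x ^ 2 - 2 * nu * bessel_ratio_defect nu x) / x).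
  assert (Hr : is_lim r p_infty 0).
  { apply (is_lim_le_le_loc (fun x => - K / x) (fun x => K / x)).
    - exists 0. intros x Hx. pose proof (bessel_ratio_defect_bounds x Hx).
      unfold r, Rdiv. split; apply Rmult_le_compat_r;
        try (left; apply Rinv_0_lt_compat, Hx); unfold K; nra.
    - apply (is_lim_div_id _ (- K)), is_lim_const.
    - apply (is_lim_div_id _ K), is_lim_const. }
  assert (Hh : is_lim (fun x => bessel_ratio_defect nu x - (2 * nu + 1) / 2) p_infty 0).
  { apply (is_lim_linear_ode _ r 2 ltac:(lra)); [| exact Hr].
    intros x Hx. eapply is_derive_eq.
    - apply (is_derive_minus _ (fun _ => (2 * nu + 1) / 2));
        [apply is_derive_bessel_ratio_defect, Hx | apply is_derive_const].
    - unfold r, minus, plus, opp, zero; simpl. ring. }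
  apply (is_lim_ext (fun x => (bessel_ratio_defect nu x - (2 * nu + 1) / 2) + (2 * nu + 1) / 2));
    [intros x; ring |].
  replace (Finite ((2 * nu + 1) / 2)) with (Rbar_plus 0 ((2 * nu + 1) / 2))
    by (simpl; f_equal; ring).
  apply (is_lim_plus _ _ _ 0 ((2 * nu + 1) / 2)); [exact Hh | apply is_lim_const | reflexivity].
Qed.

Lemma is_lim_bessel_ratio : is_lim (bessel_ratio nu) p_infty 1.
Proof.
  apply (is_lim_ext_loc (fun x => 1 - bessel_ratio_defect nu x / x)).
  - exists 0. intros x Hx. symmetry. apply bessel_ratio_eq_defect, Hx.
  - replace (Finite 1) with (Rbar_minus 1 0) by (simpl; f_equal; ring).
    apply (is_lim_minus _ _ _ 1 0); [apply is_lim_const | | reflexivity].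
    apply (is_lim_div_id _ _ is_lim_bessel_ratio_defect).
Qed.

End BesselRatioDefect.

Theorem mainTheorem6 (nu : R) (hnu : 0 <= nu) :
  is_lim (lambda nu) p_infty (4 / (2 * nu + 1)).
Proof.
  set (L := (2 * nu + 1) / 2).
  assert (Hden : is_lim (fun x => x * ln (1 - bessel_ratio_defect nu x / x)) p_infty (- L))
    by apply is_lim_mul_ln_1_sub_div, is_lim_bessel_ratio_defect, hnu.
  assert (Hnum : is_lim (fun x => x * ln (1 - 2 * bessel_ratio nu x / x)) p_infty (- 2)).
  { replace (- 2) with (- (2 * 1)) by ring.
    apply (is_lim_mul_ln_1_sub_div (fun x => 2 * bessel_ratio nu x)).
    apply (is_lim_scal_l _ 2 _ 1), is_lim_bessel_ratio, hnu. }
  apply (is_lim_ext_loc (fun x => x * ln (1 - 2 * bessel_ratio nu x / x)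
                                  / (x * ln (1 - bessel_ratio_defect nu x / x)))).
  - exists 0. intros x Hx. unfold lambda.
    rewrite Psi_eq_bessel_ratio, <- bessel_ratio_eq_defect by assumption.
    replace (2 / x * bessel_ratio nu x) with (2 * bessel_ratio nu x / x) by (field; lra).
    unfold Rdiv. rewrite Rinv_mult, <- (Rmult_1_l (ln (1 - _) * _)), <- (Rinv_r x) by lra. ring.
  - replace (Finite (4 / (2 * nu + 1))) with (Rbar_div (- 2) (- L))
      by (simpl; f_equal; unfold L; field; lra).
    apply is_lim_div; [exact Hnum | exact Hden | | exact I].
    simpl. intros E. injection E. unfold L. lra.
Qed.
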